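(* Let $\mathfrak a$ be an $n$-dimensional real Euclidean vector space, $\Delta\subset\mathfrak a^*$ a reduced root system (i.e. $2\alpha\notin\Delta$ for $\alpha\in\Delta$) with positive system $\Delta^+$, and $m$ a Weyl-group-invariant multiplicity function on $\Delta$ with $m_\alpha\in2\mathbb N$ for all $\alpha\in\Delta$. With the notation $\lambda_\alpha$, $\rho$, $P^+$, $\mathbf c(m,\lambda)$ and $d(m,\mu)$ explained in the context, the following hold: (1) For all $\mu\in P^+$, $$d(m,\mu)=\frac{\mathbf c(m,-\rho)}{\mathbf c(m,\mu+\rho)\,\mathbf c(m,-(\mu+\rho))}.$$ (2) The function $\mu\mapsto d(m,\mu)$ on $P^+$ extends to a polynomial function on $\mathfrak a^*_{\mathbb C}$, namely $$d(m,\lambda)=\prod_{\alpha\in\Delta^+}\prod_{k=0}^{m_\alpha/2-1}\frac{k^2-(\lambda+\rho)_\alpha^2}{k^2-\rho_\alpha^2}.$$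
   Context: The inner product $\langle\cdot,\cdot\rangle$ of $\mathfrak a$ is transferred to $\mathfrak a^*$ and extended complex-bilinearly to $\mathfrak a^*_{\mathbb C}$. For $\lambda\in\mathfrak a^*_{\mathbb C}$ and $\alpha\in\Delta$ put $\lambda_\alpha:=\langle\lambda,\alpha\rangle/\langle\alpha,\alpha\rangle$. Let $\rho:=\frac12\sum_{\alpha\in\Delta^+}m_\alpha\alpha$ and $P^+:=\{\mu\in\mathfrak a^*:\mu_\alpha\in\mathbb Z_{\ge0}\text{ for all }\alpha\in\Delta^+\}$. The $\mathbf c$-function is $$\mathbf c(m,\lambda):=\Big(C\prod_{\alpha\in\Delta^+}\prod_{k=0}^{m_\alpha/2-1}(\lambda_\alpha+k)\Big)^{-1},\qquad C:=\prod_{\alpha\in\Delta^+}\prod_{k=0}^{m_\alpha/2-1}\frac1{\rho_\alpha+k},$$ a meromorphic function of $\lambda\in\mathfrak a^*_{\mathbb C}$. The Plancherel density is defined for $\mu\in P^+$ by Vretare's formula $$d(m,\mu):=\lim_{\varepsilon\to0}\frac{\mathbf c(m,-\rho+\varepsilon)}{\mathbf c(m,\mu+\rho)\,\mathbf c(m,-\mu-\rho+\varepsilon)},$$ with $\varepsilon\in\mathfrak a^*_{\mathbb C}$ tending to $0$. *)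

From HB Require Import structures.
From mathcomp Require Import all_boot all_order all_algebra.
From mathcomp Require Import complex.
From mathcomp Require Import reals.
Set Implicit Arguments. Unset Strict Implicit. Unset Printing Implicit Defensive.
Import Order.TTheory GRing.Theory Num.Theory.
Local Open Scope ring_scope.
Local Open Scope complex_scope.

Section RootData.
Variables (R : realType) (n : nat).
(* a = R^n with its standard inner product; a^* is identified with a
   through the inner product; a^*_C = C^n with the complex-bilinear extension. *)
Local Notation vec := 'rV[R]_n.
Local Notation cvec := 'rV[R[i]]_n.

Definition dotr (u v : vec) : R := \sum_(i < n) u 0 i * v 0 i.

Definition dotc (l : cvec) (a : vec) : R[i] := \sum_(i < n) l 0 i * (a 0 i)%:C.

Definition cpx (v : vec) : cvec := map_mx (fun x : R => x%:C) v.

Definition refl (a x : vec) : vec := x - (2 * dotr x a / dotr a a) *: a.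

Definition root_system (D : seq vec) : Prop :=
  [/\ uniq D,
      (0 : vec) \notin D,
      (forall x : vec, (forall a, a \in D -> dotr x a = 0) -> x = 0),
      (forall a b, a \in D -> b \in D -> refl a b \in D) &
      (forall a b, a \in D -> b \in D -> exists z : int, 2 * dotr b a / dotr a a = z%:~R)].

Definition reduced (D : seq vec) : Prop :=
  forall a, a \in D -> (2 : R) *: a \notin D.

Definition positive_system (D Dp : seq vec) : Prop :=
  uniq Dp /\
  exists xi : vec, (forall a, a \in D -> dotr a xi != 0) /\
     (forall a, (a \in Dp) = (a \in D) && (0 < dotr a xi)).

(* Weyl-group invariance: invariance under the generating reflections *)
Definition weyl_invariant (D : seq vec) (m : vec -> nat) : Prop :=
  forall a b, a \in D -> b \in D -> m (refl a b) = m b.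

Variables (Dp : seq vec) (m : vec -> nat).

Definition coef (l : cvec) (a : vec) : R[i] := dotc l a / (dotr a a)%:C.

Definition rho : vec := 2^-1 *: \sum_(a <- Dp) (m a)%:R *: a.

Definition Pplus (mu : vec) : Prop :=
  forall a, a \in Dp -> exists k : nat, dotr mu a / dotr a a = k%:R.

Definition Cconst : R[i] :=
  \prod_(a <- Dp) \prod_(k < (m a)./2) (coef (cpx rho) a + k%:R)^-1.

(* the c-function c(m,lambda) = (C prod prod (lambda_alpha + k))^-1;
   cden l is the expression being inverted, c is finite at l iff cden l != 0 *)
Definition cden (l : cvec) : R[i] :=
  Cconst * \prod_(a <- Dp) \prod_(k < (m a)./2) (coef l a + k%:R).

Definition cfun (l : cvec) : R[i] := (cden l)^-1.

Definition vretare (mu : vec) (eps : cvec) : R[i] :=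
  cfun (- cpx rho + eps) / (cfun (cpx (mu + rho)) * cfun (- cpx (mu + rho) + eps)).

Definition vretare_dom (mu : vec) (eps : cvec) : Prop :=
  [/\ cden (- cpx rho + eps) != 0, cden (cpx (mu + rho)) != 0 &
      cden (- cpx (mu + rho) + eps) != 0].

(* "d(m,mu) = L": lim_{eps -> 0} vretare mu eps = L, eps ranging over the
   domain of the meromorphic function, in a^*_C = C^n with the sup norm *)
Definition plancherel_is (mu : vec) (L : R[i]) : Prop :=
  forall e : R, 0 < e -> exists2 delta : R, 0 < delta &
    forall eps : cvec, vretare_dom mu eps ->
      (forall i, `|eps 0 i| < delta%:C) -> `|vretare mu eps - L| < e%:C.

Definition dpoly (l : cvec) : R[i] :=
  \prod_(a <- Dp) \prod_(k < (m a)./2)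
     ((k%:R ^+ 2 - coef (l + cpx rho) a ^+ 2) / (k%:R ^+ 2 - coef (cpx rho) a ^+ 2)).

End RootData.

(* For a positive root a, the reflection s_a is an involution of the positive
   roots b with s_a b positive that reverses the sign of <b, a>, while the other
   positive roots (a among them) satisfy <b, a> >= 0.  With the Weyl invariance
   of m this gives rho_a >= m_a / 2, so no factor +-rho_a + k (k < m_a / 2)
   vanishes: c(m, .) is finite and nonzero at -rho, Vretare's quotient is
   continuous at eps = 0 and its limit is its value there, which expands into
   the product formula. *)

From HB Require Import structures.
From mathcomp Require Import all_boot all_order all_algebra.
From mathcomp Require Import complex.
From mathcomp Require Import reals.
From mathcomp Require Import ring lra.
Set Implicit Arguments. Unset Strict Implicit. Unset Printing Implicit Defensive.
Import Order.TTheory GRing.Theory Num.Theory.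
Local Open Scope ring_scope.
Local Open Scope complex_scope.

Section ContinuityAtOrigin.
Variables (R : realType) (n : nat).
Local Notation normc := (@Normc.normc R).
Local Notation cvec := 'rV[R[i]]_n.
Implicit Types (x y : R[i]) (F G : cvec -> R[i]).

Lemma normcE x : `|x| = (normc x)%:C.
Proof. by case: x. Qed.

Lemma normc_ge0 x : 0 <= normc x.
Proof. by case: x => a b; apply: sqrtr_ge0. Qed.

Lemma normc_gt0 x : x != 0 -> 0 < normc x.
Proof.
by move=> x0; rewrite lt_def normc_ge0 andbT; apply: contra x0 => /eqP/Normc.eq0_normc ->.
Qed.

Lemma normc_distC x y : normc (x - y) = normc (y - x).
Proof. by rewrite -normcN opprB. Qed.

Definition continuous_at0 F : Prop :=
  forall e : R, 0 < e -> exists2 d : R, 0 < d &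
    forall eps : cvec, (forall i, normc (eps 0 i) < d) -> normc (F eps - F 0) < e.

Lemma eq_continuous_at0 F G : F =1 G -> continuous_at0 F -> continuous_at0 G.
Proof. by move=> FG cF e /cF[d d0 H]; exists d => // eps /H; rewrite !FG. Qed.

Lemma continuous_at0_cst x : continuous_at0 (fun=> x).
Proof. by move=> e e0; exists 1 => // eps _; rewrite subrr Normc.normc0. Qed.

Lemma continuous_at0_coord i : continuous_at0 (fun eps => eps 0 i).
Proof. by move=> e e0; exists e => // eps; rewrite mxE subr0. Qed.

Lemma continuous_at0_both F G e1 e2 :
  continuous_at0 F -> continuous_at0 G -> 0 < e1 -> 0 < e2 ->
  exists2 d : R, 0 < d & forall eps : cvec, (forall i, normc (eps 0 i) < d) ->
    normc (F eps - F 0) < e1 /\ normc (G eps - G 0) < e2.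
Proof.
move=> cF cG /cF[d1 d10 H1] /cG[d2 d20 H2].
exists (Order.min d1 d2) => [|eps eps_small]; first by rewrite lt_min d10.
have /all_and2[eps1 eps2] : forall i, normc (eps 0 i) < d1 /\ normc (eps 0 i) < d2.
  by move=> i; apply/andP; rewrite -lt_min.
by split; [apply: H1 | apply: H2].
Qed.

Lemma continuous_at0D F G :
  continuous_at0 F -> continuous_at0 G -> continuous_at0 (fun eps => F eps + G eps).
Proof.
move=> cF cG e e0.
have e2 : 0 < e / 2 by lra.
have [d d0 H] := continuous_at0_both cF cG e2 e2.
exists d => // eps /H[hF hG].
have := le_normcD (F eps - F 0) (G eps - G 0).
rewrite addrACA -opprD; lra.
Qed.

Lemma continuous_at0M F G :
  continuous_at0 F -> continuous_at0 G -> continuous_at0 (fun eps => F eps * G eps).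
Proof.
move=> cF cG e e0.
set f := normc (F 0); set g := normc (G 0).
have [f0 g0] : 0 <= f /\ 0 <= g by rewrite !normc_ge0.
pose d := Order.min 1 (e / (1 + f + g)).
have d0 : 0 < d by rewrite lt_min ltr01 divr_gt0 //; lra.
have d1 : d <= 1 by rewrite ge_min lexx.
have de : d * (1 + f + g) <= e by rewrite -ler_pdivlMr ?ge_min ?lexx ?orbT //; lra.
have [d' d'0 H] := continuous_at0_both cF cG d0 d0.
exists d' => // eps /H[]; set u := F eps - F 0; set v := G eps - G 0 => hu hv.
have -> : F eps * G eps - F 0 * G 0 = u * v + u * G 0 + F 0 * v by rewrite /u /v; ring.
have := le_normcD (u * v + u * G 0) (F 0 * v).
have := le_normcD (u * v) (u * G 0).
rewrite !Normc.normcM -/f -/g.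
have [u0 v0] : 0 <= normc u /\ 0 <= normc v by rewrite !normc_ge0.
nra.
Qed.

Lemma continuous_at0V F :
  continuous_at0 F -> F 0 != 0 -> continuous_at0 (fun eps => (F eps)^-1).
Proof.
move=> cF F0 e e0.
set a := normc (F 0).
have a0 : 0 < a by apply: normc_gt0.
have e1 : 0 < Order.min (a / 2) (e * a * a / 2) by rewrite lt_min !divr_gt0 ?mulr_gt0.
have [d d0 H] := cF _ e1.
exists d => // eps /H; rewrite lt_min => /andP[h1 h2].
set x := F eps in h1 h2 *.
have xa : a / 2 < normc x.
  have := le_normcD (F 0 - x) x; rewrite subrK normc_distC -/a; lra.
have x0 : x != 0 by rewrite -(normr_gt0 x) normcE ltcR; lra.
have -> : x^-1 - (F 0)^-1 = (F 0 - x) / (x * F 0) by field; rewrite x0 F0.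
rewrite Normc.normcM Normc.normcV Normc.normcM -/a normc_distC.
rewrite ltr_pdivrMr; last by rewrite mulr_gt0 //; lra.
have := mulr_gt0 e0 a0; nra.
Qed.

Lemma continuous_at0_sum (I : Type) (r : seq I) (F : I -> cvec -> R[i]) :
  (forall i, continuous_at0 (F i)) -> continuous_at0 (fun eps => \sum_(i <- r) F i eps).
Proof.
move=> cF; elim: r => [|j r IH].
  by apply: eq_continuous_at0 (continuous_at0_cst 0) => eps; rewrite big_nil.
by apply: eq_continuous_at0 (continuous_at0D (cF j) IH) => eps; rewrite big_cons.
Qed.

Lemma continuous_at0_prod (I : Type) (r : seq I) (F : I -> cvec -> R[i]) :
  (forall i, continuous_at0 (F i)) -> continuous_at0 (fun eps => \prod_(i <- r) F i eps).
Proof.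
move=> cF; elim: r => [|j r IH].
  by apply: eq_continuous_at0 (continuous_at0_cst 1) => eps; rewrite big_nil.
by apply: eq_continuous_at0 (continuous_at0M (cF j) IH) => eps; rewrite big_cons.
Qed.

End ContinuityAtOrigin.
Arguments continuous_at0_cst {R n}.

Lemma sum_odd_involution (V : numDomainType) (T : eqType) (s : seq T)
    (f : T -> T) (F : T -> V) :
  uniq s -> involutive f -> {in s, forall x, f x \in s} ->
  {in s, forall x, F (f x) = - F x} -> \sum_(x <- s) F x = 0.
Proof.
move=> s_uniq fK s_f Ff.
have s_perm : perm_eq (map f s) s.
  apply: uniq_perm; rewrite ?map_inj_uniq //; first exact: inv_inj.
  move=> x; apply/mapP/idP => [[y /s_f + ->] //|xs].
  by exists (f x); rewrite ?fK ?s_f.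
have sum_f : \sum_(x <- s) F (f x) = \sum_(x <- s) F x.
  by rewrite -(big_map f xpredT F) (perm_big _ s_perm).
by apply/eqP; rewrite -eqNr -sumrN -(eq_big_seq _ Ff) sum_f.
Qed.

Section PositiveRoots.
Variables (R : realType) (n : nat).
Local Notation vec := 'rV[R]_n.
Implicit Types (a b u v w : vec).

Lemma dotrDl u v w : dotr (u + v) w = dotr u w + dotr v w.
Proof. by rewrite /dotr -big_split; apply: eq_bigr => i _; rewrite mxE mulrDl. Qed.

Lemma dotrZl k u w : dotr (k *: u) w = k * dotr u w.
Proof. by rewrite /dotr mulr_sumr; apply: eq_bigr => i _; rewrite mxE mulrA. Qed.

Lemma dotr_suml (I : Type) (r : seq I) (F : I -> vec) w :
  dotr (\sum_(i <- r) F i) w = \sum_(i <- r) dotr (F i) w.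
Proof.
have dotr0l : dotr 0 w = 0 by rewrite /dotr big1 // => i _; rewrite mxE mul0r.
by rewrite (big_morph (fun u => dotr u w) (fun u v => dotrDl u v w) dotr0l).
Qed.

Lemma dotr_gt0 a : a != 0 -> 0 < dotr a a.
Proof.
move=> a0; have sq_ge0 i : true -> 0 <= a 0 i * a 0 i by rewrite -expr2 sqr_ge0.
rewrite lt_def sumr_ge0 // andbT /dotr psumr_eq0 //.
apply: contra a0 => /allP a_eq0; apply/eqP/rowP => i.
by have := a_eq0 i (mem_index_enum i); rewrite mxE /= mulf_eq0 orbb => /eqP.
Qed.

Lemma dotr_refl a b w :
  dotr (refl a b) w = dotr b w - (2 * dotr b a / dotr a a) * dotr a w.
Proof. by rewrite /refl dotrDl -scaleNr dotrZl mulNr. Qed.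

Lemma dotr_refl_self a b : dotr a a != 0 -> dotr (refl a b) a = - dotr b a.
Proof. by move=> a0; rewrite dotr_refl; field. Qed.

Lemma reflK a : dotr a a != 0 -> involutive (refl a).
Proof.
move=> a0 x; rewrite {1}/refl dotr_refl_self // mulrN mulNr scaleNr opprK.
by rewrite /refl subrK.
Qed.

Variables (D Dp : seq vec) (m : vec -> nat).
Hypotheses (D_root : root_system D) (Dp_pos : positive_system D Dp)
  (m_inv : weyl_invariant D m).

Lemma positive_root_root a : a \in Dp -> a \in D.
Proof. by case: Dp_pos => _ [xi [_ ->]] /andP[]. Qed.

Lemma dotr_root_gt0 a : a \in D -> 0 < dotr a a.
Proof.
by case: D_root => _ D0 _ _ _ aD; apply: dotr_gt0; apply: contraNneq D0 => <-.
Qed.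

Lemma refl_positive_root_self a : a \in Dp -> refl a a \notin Dp.
Proof.
case: Dp_pos => _ [xi [_ posE]] aDp.
have a0 := dotr_root_gt0 (positive_root_root aDp).
move: (aDp); rewrite !posE => /andP[_ a_xi]; rewrite negb_and -leNgt dotr_refl.
by rewrite mulfK ?gt_eqF //; apply/orP; right; lra.
Qed.

Lemma dotr_ge0_of_refl_not_positive a b : a \in Dp -> b \in Dp ->
  refl a b \notin Dp -> 0 <= dotr b a.
Proof.
case: Dp_pos D_root => _ [xi [_ posE]] [_ _ _ D_refl _] aDp bDp.
have a0 := dotr_root_gt0 (positive_root_root aDp).
rewrite posE D_refl ?positive_root_root //= -leNgt dotr_refl => sab_xi.
move: aDp bDp; rewrite !posE => /andP[_ a_xi] /andP[_ b_xi].
have : 0 < 2 * dotr b a / dotr a a.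
  by rewrite -(pmulr_lgt0 _ a_xi); lra.
by rewrite pmulr_lgt0 ?invr_gt0 // pmulr_rgt0 // => /ltW.
Qed.

Lemma mult_le_sum_mult_dotr a : a \in Dp ->
  (m a)%:R * dotr a a <= \sum_(b <- Dp) (m b)%:R * dotr b a.
Proof.
move=> aDp; have aa0 := lt0r_neq0 (dotr_root_gt0 (positive_root_root aDp)).
have Dp_uniq : uniq Dp by case: Dp_pos.
pose F b := (m b)%:R * dotr b a.
rewrite (bigID (fun b => refl a b \in Dp)) /=.
have -> : \sum_(b <- Dp | refl a b \in Dp) F b = 0.
  rewrite -big_filter; apply: (sum_odd_involution (f := refl a)).
  - by rewrite filter_uniq.
  - exact: reflK.
  - by move=> b; rewrite !mem_filter reflK // => /andP[-> ->].
  move=> b; rewrite mem_filter => /andP[_ bDp].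
  rewrite /F m_inv ?positive_root_root // dotr_refl_self //.
  by rewrite mulrN.
rewrite add0r -big_filter (bigD1_seq a) ?filter_uniq //=; last first.
  by rewrite mem_filter refl_positive_root_self.
rewrite lerDl big_seq_cond sumr_ge0 // => b /andP[]; rewrite mem_filter.
move=> /andP[sb bDp] _; rewrite mulr_ge0 //.
exact: dotr_ge0_of_refl_not_positive aDp bDp sb.
Qed.

Lemma half_mult_le_rho_coef a : a \in Dp ->
  (m a)%:R / 2 <= dotr (rho Dp m) a / dotr a a.
Proof.
move=> aDp; have aa0 := dotr_root_gt0 (positive_root_root aDp).
rewrite ler_pdivlMr // /rho dotrZl dotr_suml.
under eq_bigr do rewrite dotrZl.
have := mult_le_sum_mult_dotr aDp; lra.
Qed.

Lemma rho_coef_gt a k : a \in Dp -> (k < (m a)./2)%N ->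
  k%:R < dotr (rho Dp m) a / dotr a a.
Proof.
move=> aDp k_lt; apply: lt_le_trans (half_mult_le_rho_coef aDp).
rewrite ltr_pdivlMr // -natrM ltr_nat muln2.
by rewrite gtn_half_double in k_lt; apply: ltnW.
Qed.

End PositiveRoots.

Section CFunction.
Variables (R : realType) (n : nat) (Dp : seq 'rV[R]_n) (m : 'rV[R]_n -> nat).
Local Notation rho := (rho Dp m).
Local Notation cden := (cden Dp m).
Implicit Types (u v a : 'rV[R]_n) (l : 'rV[R[i]]_n).

Lemma cpxD u v : cpx (u + v) = cpx u + cpx v.
Proof. by apply/rowP => i; rewrite !mxE rmorphD. Qed.

Lemma coef_cpx v a : coef (cpx v) a = (dotr v a / dotr a a)%:C.
Proof.
rewrite /coef /dotc /dotr rmorphM fmorphV; congr (_ * _).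
by rewrite rmorph_sum; apply: eq_bigr => i _; rewrite mxE rmorphM.
Qed.

Lemma coefN l a : coef (- l) a = - coef l a.
Proof.
rewrite /coef /dotc -mulNr -sumrN.
by congr (_ * _); apply: eq_bigr => i _; rewrite mxE mulNr.
Qed.

Lemma continuous_at0_coef l a : continuous_at0 (fun eps => coef (l + eps) a).
Proof.
have coord_term i : continuous_at0 (fun eps => (l + eps) 0 i * (a 0 i)%:C).
  have := continuous_at0M (continuous_at0D (continuous_at0_cst (l 0 i))
    (continuous_at0_coord i)) (continuous_at0_cst (a 0 i)%:C).
  apply: eq_continuous_at0 => eps.
  by rewrite mxE.
exact: continuous_at0M (continuous_at0_sum _ coord_term) (continuous_at0_cst _).
Qed.

Lemma continuous_at0_cden l : continuous_at0 (fun eps => cden (l + eps)).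
Proof.
apply: continuous_at0M (continuous_at0_cst _) _.
apply: continuous_at0_prod => a; apply: continuous_at0_prod => k.
exact: continuous_at0D (continuous_at0_coef l a) (continuous_at0_cst _).
Qed.

Lemma vretareE mu eps : vretare Dp m mu eps =
  cden (cpx (mu + rho)) * cden (- cpx (mu + rho) + eps) / cden (- cpx rho + eps).
Proof.
rewrite /vretare /cfun.
move: (cden (- cpx rho + eps)) (cden (cpx (mu + rho))) (cden (- cpx (mu + rho) + eps)).
by move=> a b c; rewrite invfM !invrK mulrC.
Qed.

Lemma plancherel_is_vretare0 mu :
  cden (- cpx rho) != 0 -> plancherel_is Dp m mu (vretare Dp m mu 0).
Proof.
move=> c_rho e e0.
have : continuous_at0 (vretare Dp m mu).
  apply: eq_continuous_at0 (fun eps => esym (vretareE mu eps)) _.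
  apply: continuous_at0M.
    exact: continuous_at0M (continuous_at0_cst _) (continuous_at0_cden _).
  by apply: continuous_at0V (continuous_at0_cden _) _; rewrite addr0.
case/(_ e e0) => d d0 vretare_close; exists d => // eps _ eps_small.
rewrite normcE ltcR; apply: vretare_close => i.
by rewrite -ltcR -normcE.
Qed.

Lemma dpoly_vretare0 mu : dpoly Dp m (cpx mu) = vretare Dp m mu 0.
Proof.
rewrite vretareE !addr0 /dpoly.
set y := cpx (mu + rho); set r := cpx rho.
pose P l := \prod_(a <- Dp) \prod_(k < (m a)./2) (coef l a + k%:R).
have factor (Y Z : R[i]) (k : nat) :
    (k%:R ^+ 2 - Y ^+ 2) / (k%:R ^+ 2 - Z ^+ 2) =
    (Y + k%:R) * (- Y + k%:R) * ((Z + k%:R)^-1 * (- Z + k%:R)^-1).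
  have sq (X : R[i]) : k%:R ^+ 2 - X ^+ 2 = (X + k%:R) * (- X + k%:R) by ring.
  by rewrite !sq invfM.
under eq_bigr do under eq_bigr do rewrite -cpxD -/y factor -!coefN.
under eq_bigr do rewrite !big_split !prodfV /=.
rewrite !big_split !prodfV -/(P y) -/(P (- y)) -/(P r) -/(P (- r)) /=.
have CE : Cconst Dp m = (P r)^-1.
  by rewrite /Cconst -prodfV; apply: eq_bigr => a _; rewrite prodfV.
rewrite /cden -/(P y) -/(P (- y)) -/(P (- r)) CE invfM.
move: (P r)^-1 (P (- r))^-1 => c q.
have [->|c0] := eqVneq c 0; first by rewrite !(mul0r, mulr0).
by field.
Qed.

Hypothesis rho_coef_large : forall a k, a \in Dp -> (k < (m a)./2)%N ->
  k%:R < dotr rho a / dotr a a.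

Lemma rho_coef_shift_neq0 a k : a \in Dp -> (k < (m a)./2)%N ->
  [/\ coef (cpx rho) a + k%:R != 0, coef (- cpx rho) a + k%:R != 0
     & k%:R ^+ 2 - coef (cpx rho) a ^+ 2 != 0].
Proof.
move=> aDp k_lt; have := rho_coef_large aDp k_lt.
set t := dotr rho a / dotr a a => kt; have k0 := ler0n R k.
have -> : coef (cpx rho) a + k%:R = (t + k%:R)%:C.
  by rewrite coef_cpx rmorphD rmorph_nat.
have -> : coef (- cpx rho) a + k%:R = (- t + k%:R)%:C.
  by rewrite coefN coef_cpx rmorphD rmorphN rmorph_nat.
have -> : k%:R ^+ 2 - coef (cpx rho) a ^+ 2 = (k%:R ^+ 2 - t ^+ 2)%:C.
  by rewrite coef_cpx rmorphB !rmorphXn rmorph_nat.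
rewrite !(fmorph_eq0 (real_complex R)).
by split; [rewrite gt_eqF | rewrite lt_eqF | rewrite lt_eqF] => //; nra.
Qed.

Lemma cden_neg_rho_neq0 : cden (- cpx rho) != 0.
Proof.
rewrite /cden /Cconst mulf_neq0 // prodf_seq_neq0; apply/allP => a aDp /=;
  rewrite prodf_seq_neq0; apply/allP => k _ /=.
- by rewrite invr_eq0; case: (rho_coef_shift_neq0 aDp (ltn_ord k)).
- by case: (rho_coef_shift_neq0 aDp (ltn_ord k)).
Qed.

End CFunction.

Theorem corollary1p3 (R : realType) (n : nat) (D Dp : seq 'rV[R]_n)
    (m : 'rV[R]_n -> nat) :
  root_system D -> reduced D -> positive_system D Dp ->
  weyl_invariant D m -> (forall a, a \in D -> ~~ odd (m a)) ->
  (* (1) *)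
  (forall mu, Pplus Dp mu ->
     plancherel_is Dp m mu
       (cfun Dp m (- cpx (rho Dp m)) /
        (cfun Dp m (cpx (mu + rho Dp m)) * cfun Dp m (- cpx (mu + rho Dp m))))) /\
  (* (2): the product formula is a polynomial (constant nonzero denominators)
     and it agrees with d(m, .) on P^+ *)
  (forall a, a \in Dp -> forall k : nat, (k < (m a)./2)%N ->
     (k%:R ^+ 2 - coef (cpx (rho Dp m)) a ^+ 2 : R[i]) != 0) /\
  (forall mu, Pplus Dp mu -> plancherel_is Dp m mu (dpoly Dp m (cpx mu))).
Proof.
move=> D_root _ Dp_pos m_inv _.
have rho_gt := rho_coef_gt D_root Dp_pos m_inv.
have d_at_vretare0 mu : plancherel_is Dp m mu (vretare Dp m mu 0).
  exact: plancherel_is_vretare0 (cden_neg_rho_neq0 rho_gt).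
split; [|split].
- by move=> mu _; have := d_at_vretare0 mu; rewrite /vretare !addr0.
- by move=> a aDp k k_lt; case: (rho_coef_shift_neq0 rho_gt aDp k_lt).
- by move=> mu _; rewrite dpoly_vretare0.
Qed.
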